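(* Let $f:\{0,1\}^N\to\{0,1\}$ be a partial function. Then \[\mathrm{D}(f)\leq 2\mathrm{R}_0(f)\mathrm{Bal}(f).\]
   Context: $\mathrm{D}(f)$ is deterministic and $\mathrm{R}_0(f)$ zero-error randomized query complexity. $\mathrm{Bal}(f)$ is $0$ if $f$ is constant, and otherwise $\min\{1+\log|f^{-1}(0)|,\,1+\log|f^{-1}(1)|\}$ (log base 2). *)

From mathcomp Require Import all_boot all_order all_algebra.
From mathcomp Require Import all_classical all_reals all_analysis.
From Stdlib Require List.
Set Implicit Arguments. Unset Strict Implicit. Unset Printing Implicit Defensive.
Import Order.TTheory GRing.Theory Num.Theory.
Local Open Scope ring_scope.

Definition input (N : nat) := {ffun 'I_N -> bool}.

(* A partial Boolean function: None outside the domain. *)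
Definition pfun (N : nat) := input N -> option bool.

Definition in_dom N (f : pfun N) (x : input N) : bool := f x != None.

Inductive dtree (N : nat) : Type :=
| Leaf of bool
| Node of 'I_N & dtree N & dtree N.

Arguments Leaf {N}.
Arguments Node {N}.

Fixpoint dt_eval N (t : dtree N) (x : input N) : bool :=
  match t with
  | Leaf b => b
  | Node i t0 t1 => if x i then dt_eval t1 x else dt_eval t0 x
  end.

Fixpoint dt_cost N (t : dtree N) (x : input N) : nat :=
  match t with
  | Leaf _ => 0
  | Node i t0 t1 => (if x i then dt_cost t1 x else dt_cost t0 x).+1
  end.

Fixpoint dt_depth N (t : dtree N) : nat :=
  match t with
  | Leaf _ => 0
  | Node _ t0 t1 => (maxn (dt_depth t0) (dt_depth t1)).+1
  end.

Definition computes N (f : pfun N) (t : dtree N) : Prop :=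
  forall x : input N, in_dom f x -> f x = Some (dt_eval t x).

Definition Dq (R : realType) N (f : pfun N) : R :=
  inf [set (dt_depth t)%:R | t in [set t : dtree N | computes f t]].

(* A randomized decision tree: a finitely supported probability distribution
   over deterministic decision trees (list of (weight, tree) pairs). *)
Definition rdtree (R : realType) N := seq (R * dtree N).

Definition is_distr (R : realType) N (mu : rdtree R N) : Prop :=
  (forall p, List.In p mu -> 0 <= p.1) /\ \sum_(p <- mu) p.1 = 1.

Definition zero_error (R : realType) N (f : pfun N) (mu : rdtree R N) : Prop :=
  is_distr mu /\ forall p, List.In p mu -> computes f p.2.

Definition exp_cost (R : realType) N (mu : rdtree R N) (x : input N) : R :=
  \sum_(p <- mu) p.1 * (dt_cost p.2 x)%:R.

Definition worst_exp_cost (R : realType) N (f : pfun N) (mu : rdtree R N) : R :=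
  \big[Num.max/0]_(x : input N | in_dom f x) exp_cost mu x.

Definition R0q (R : realType) N (f : pfun N) : R :=
  inf [set worst_exp_cost f mu | mu in [set mu : rdtree R N | zero_error f mu]].

Definition log2 (R : realType) (x : R) : R := ln x / ln 2.

Definition preim_size N (f : pfun N) (b : bool) : nat :=
  #|[set x : input N | f x == Some b]|.

Definition Bal (R : realType) N (f : pfun N) : R :=
  if (preim_size f false == 0)%N || (preim_size f true == 0)%N then 0
  else Num.min (1 + log2 (preim_size f false)%:R)
               (1 + log2 (preim_size f true)%:R).

From mathcomp Require Import all_boot all_order all_algebra.
From mathcomp Require Import all_classical all_reals all_analysis.
From mathcomp Require Import zify lra.
Import Order.TTheory GRing.Theory Num.Theory.
Set Implicit Arguments. Unset Strict Implicit.
Local Open Scope ring_scope.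

(* Let mu be a zero-error randomized tree of worst expected cost c and let
   d = floor(2c).  By Markov's inequality every input of the domain is
   answered within d queries by trees of total weight at least 1/2, so by
   averaging some tree of the support answers within d queries on at least
   half of any set S of such inputs.  Running that tree for d steps and
   recursing on the remaining inputs halves S each time; starting from
   S = f^-1(b), after floor(log |S|) + 1 <= Bal(f) rounds only inputs outside
   f^-1(b) are left, on which the constant answer ~~ b is correct. *)

Fixpoint graft N (t : dtree N) (d : nat) (t' : dtree N) : dtree N :=
  match t, d with
  | Leaf b, _ => Leaf b
  | Node _ _ _, 0 => t'
  | Node i t0 t1, d.+1 => Node i (graft t0 d t') (graft t1 d t')
  end.

Lemma graft_depth N (t t' : dtree N) d :
  (dt_depth (graft t d t') <= d + dt_depth t')%N.
Proof.
elim: t d => [b|i t0 IH0 t1 IH1] [|d] //=.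
by rewrite ltnS geq_max (leq_trans (IH0 d)) ?(leq_trans (IH1 d)).
Qed.

Lemma graft_eval N (t t' : dtree N) d x :
  dt_eval (graft t d t') x =
  if (dt_cost t x <= d)%N then dt_eval t x else dt_eval t' x.
Proof. by elim: t d => [b|i t0 IH0 t1 IH1] [|d] //=; case: (x i). Qed.

Lemma ler_sum_In (R : numDomainType) T (s : seq T) (F G : T -> R) :
  (forall p, List.In p s -> F p <= G p) ->
  \sum_(p <- s) F p <= \sum_(p <- s) G p.
Proof.
elim: s => [|a s IH] FG; first by rewrite !big_nil.
rewrite !big_cons lerD ?FG //=; first by left.
by apply: IH => p sp; apply: FG; right.
Qed.

Lemma sum_mem_card (R : pzSemiRingType) (T : finType) (A B : {set T}) :
  \sum_(x in A) ((x \in B)%:R : R) = #|A :&: B|%:R.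
Proof.
rewrite -sum1_card natr_sum big_mkcond [RHS]big_mkcond /=.
by apply: eq_bigr => x _; rewrite inE; case: (x \in A); case: (x \in B).
Qed.

Definition halts_within N (t : dtree N) (d : nat) : {set input N} :=
  [set x | (dt_cost t x <= d)%N].

Definition mass_within (R : realType) N (mu : rdtree R N) (d : nat) x : R :=
  \sum_(p <- mu) p.1 * (x \in halts_within p.2 d)%:R.

Definition computes_outside N (f : pfun N) (S : {set input N}) (t : dtree N) :=
  forall x, in_dom f x -> x \notin S -> f x = Some (dt_eval t x).

Lemma computes_outside_card0 N (f : pfun N) (S : {set input N}) (t : dtree N) :
  #|S| = 0%N -> computes_outside f S t -> computes f t.
Proof. by move/card0_eq=> S_0 t_off x x_dom; apply: t_off; rewrite ?S_0. Qed.

Section HalvingConstruction.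

Variables (R : realType) (N : nat) (f : pfun N) (mu : rdtree R N).

Lemma markov_mass_within x d : is_distr mu ->
  2 * exp_cost mu x < d.+1%:R -> 1 <= 2 * mass_within mu d x.
Proof.
move=> [w_ge0 w_sum1] cost_lt.
have beyond : (1 - mass_within mu d x) * d.+1%:R <= exp_cost mu x.
  rewrite -{1}w_sum1 -sumrB mulr_suml; apply: ler_sum_In => p mu_p.
  rewrite -[X in X - _]mulr1 -mulrBr -mulrA ler_wpM2l ?w_ge0 // inE.
  by case: leqP => cost_d; rewrite ?subrr ?mul0r // subr0 mul1r ler_nat.
have : 2 * (1 - mass_within mu d x) < 1.
  rewrite -(ltr_pM2r (ltr0Sn _ d)) mul1r -mulrA.
  exact: le_lt_trans (ler_wpM2l _ beyond) cost_lt.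
lra.
Qed.

Lemma exists_tree_halving d (S : {set input N}) : is_distr mu ->
  (forall x, x \in S -> 1 <= 2 * mass_within mu d x) -> (0 < #|S|)%N ->
  exists p, List.In p mu /\ (#|S| <= 2 * #|S :&: halts_within p.2 d|)%N.
Proof.
move=> [w_ge0 w_sum1] S_mass S_gt0; apply: contrapT => /forallNP no_good.
have small p : List.In p mu -> (2 * #|S :&: halts_within p.2 d| <= #|S|.-1)%N.
  by move=> mu_p; rewrite -ltnS prednK // ltnNge; apply/negP => ?; apply: (no_good p).
have : (#|S|%:R : R) <= (#|S|.-1)%:R.
  rewrite -[in leLHS]sum1_card natr_sum; apply: le_trans (ler_sum _ S_mass) _.
  have -> : \sum_(x in S) 2 * mass_within mu d x =
            \sum_(p <- mu) p.1 * (2 * #|S :&: halts_within p.2 d|)%N%:R.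
    rewrite -mulr_sumr /mass_within exchange_big mulr_sumr /=.
    by apply: eq_bigr => p _; rewrite -mulr_sumr sum_mem_card natrM mulrCA.
  rewrite -[leRHS]mul1r -[X in X * _]w_sum1 mulr_suml.
  by apply: ler_sum_In => p mu_p; rewrite ler_wpM2l ?w_ge0 // ler_nat small.
by rewrite ler_nat; case: #|S| S_gt0 => // n _; rewrite ltnn.
Qed.

Hypothesis mu_zero_error : zero_error f mu.

Lemma halving_tree d k (S : {set input N}) (t0 : dtree N) :
  (forall x, x \in S -> 1 <= 2 * mass_within mu d x) -> (#|S| < 2 ^ k)%N ->
  computes_outside f S t0 ->
  exists t, (dt_depth t <= d * k + dt_depth t0)%N /\ computes f t.
Proof.
have [mu_distr mu_computes] := mu_zero_error.
elim: k S t0 => [|k IH] S t0 S_mass S_lt t0_off.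
  exists t0; split; first by rewrite leq_addl.
  by apply: computes_outside_card0 t0_off; move: S_lt; rewrite expn0 ltnS leqn0 => /eqP.
have [S_0|S_gt0] := posnP #|S|.
  by exists t0; split; [rewrite leq_addl | exact: computes_outside_card0 t0_off].
have [p [mu_p S_half]] := exists_tree_halving mu_distr S_mass S_gt0.
set S' := S :\: halts_within p.2 d.
have S'_lt : (#|S'| < 2 ^ k)%N.
  by move: S_lt S_half (cardsID (halts_within p.2 d) S); rewrite -/S' expnS; lia.
have S'_mass x : x \in S' -> 1 <= 2 * mass_within mu d x.
  by rewrite inE => /andP [_ /S_mass].
have graft_off : computes_outside f S' (graft p.2 d t0).
  move=> x x_dom; rewrite !inE negb_and negbK graft_eval.
  by case: leqP => [_ _|_]; [exact: (mu_computes p) | exact: t0_off].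
have [t [t_depth t_computes]] := IH S' _ S'_mass S'_lt graft_off.
exists t; split => //; apply: leq_trans t_depth _.
by rewrite mulnS [(d + _)%N]addnC -addnA leq_add2l graft_depth.
Qed.

End HalvingConstruction.

Lemma exp_cost_le_worst (R : realType) N (f : pfun N) (mu : rdtree R N) x :
  in_dom f x -> exp_cost mu x <= worst_exp_cost f mu.
Proof. exact: le_bigmax_cond. Qed.

Lemma worst_exp_cost_ge0 (R : realType) N (f : pfun N) (mu : rdtree R N) :
  0 <= worst_exp_cost f mu.
Proof. exact: bigmax_ge_id. Qed.

Lemma mass_within_worst (R : realType) N (f : pfun N) (mu : rdtree R N) x :
  is_distr mu -> in_dom f x ->
  1 <= 2 * mass_within mu (Num.truncn (2 * worst_exp_cost f mu)) x.
Proof.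
move=> mu_distr x_dom; apply: markov_mass_within => //.
have /andP [_ worst_lt] := truncn_itv (mulr_ge0 (ler0n _ 2) (worst_exp_cost_ge0 f mu)).
by apply: le_lt_trans worst_lt; rewrite ler_wpM2l // exp_cost_le_worst.
Qed.

Lemma log2_nat_ge0 (R : realType) (m : nat) : (0 < m)%N -> 0 <= log2 (m%:R : R).
Proof. by move=> m_gt0; rewrite divr_ge0 // ln_ge0 // ?ler1n // ltW // ltr1n. Qed.

Lemma trunc_log_lt_log2 (R : realType) (m : nat) : (0 < m)%N ->
  ((trunc_log 2 m).+1%:R : R) <= 1 + log2 (m%:R : R).
Proof.
move=> m_gt0; rewrite -addn1 natrD addrC lerD2l /log2.
rewrite ler_pdivlMr ?ln_gt0 ?ltr1n // mulr_natl -lnXn ?ltr0n //.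
rewrite ler_ln ?posrE ?exprn_gt0 ?ltr0n // -natrX ler_nat.
exact: trunc_logP.
Qed.

Lemma Dq_le_depth (R : realType) N (f : pfun N) (t : dtree N) :
  computes f t -> Dq R f <= (dt_depth t)%:R.
Proof.
move=> t_computes; apply: ge_inf; last by exists t.
by exists 0 => _ [t' _ <-].
Qed.

Lemma leaf_computes_outside_preim N (f : pfun N) (b : bool) :
  computes_outside f [set x | f x == Some b] (Leaf (~~ b)).
Proof. by move=> x; rewrite /in_dom inE; case: (f x) => [[]|] //; case: b. Qed.

Lemma Dq_le_preim_size (R : realType) N (f : pfun N) (b : bool) (mu : rdtree R N) :
  zero_error f mu -> (0 < preim_size f b)%N ->
  Dq R f <= 2 * worst_exp_cost f mu * (1 + log2 (preim_size f b)%:R).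
Proof.
move=> mu_zero_error preim_gt0.
set d := Num.truncn (2 * worst_exp_cost f mu).
set k := (trunc_log 2 (preim_size f b)).+1.
have preim_mass x : x \in [set x | f x == Some b] -> 1 <= 2 * mass_within mu d x.
  by rewrite inE => /eqP fx; apply: mass_within_worst mu_zero_error.1 _; rewrite /in_dom fx.
have [t [t_depth t_computes]] := halving_tree mu_zero_error preim_mass
  (@trunc_log_ltn 2 _ isT) (@leaf_computes_outside_preim _ f b).
apply: le_trans (Dq_le_depth R t_computes) _.
rewrite addn0 in t_depth; apply: le_trans (_ : (d * k)%N%:R <= _); first by rewrite ler_nat.
rewrite natrM ler_pM ?ler0n ?trunc_log_lt_log2 //.
by have /andP [] := truncn_itv (mulr_ge0 (ler0n _ 2) (worst_exp_cost_ge0 f mu)).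
Qed.

Lemma point_zero_error (R : realType) N (f : pfun N) (t : dtree N) :
  computes f t -> zero_error f [:: ((1 : R), t)].
Proof.
move=> t_computes; split; last by move=> p [<-|].
by split=> [p [<-|] //|]; rewrite big_seq1.
Qed.

Lemma Dq_le_R0q_mul (R : realType) N (f : pfun N) (C : R) : 0 < C ->
  (forall mu, zero_error f mu -> Dq R f <= worst_exp_cost f mu * C) ->
  Dq R f <= R0q R f * C.
Proof.
move=> C_gt0 Dq_le.
have [[mu0 mu0_zero_error]|no_mu] :=
  pselect (exists mu : rdtree R N, zero_error f mu).
  rewrite -ler_pdivrMr //; apply: lb_le_inf; first by exists (worst_exp_cost f mu0), mu0.
  by move=> _ [mu mu_zero_error <-]; rewrite ler_pdivrMr // Dq_le.
(* Without a zero-error algorithm both infima range over empty sets, and [inf set0 = 0]. *)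
have no_tree t : ~ computes f t.
  by move/point_zero_error => t_zero_error; apply: (no_mu); exists [:: (1, t)].
have R0q_set0 :
    [set worst_exp_cost f mu | mu in [set mu | zero_error f mu]]%classic = set0 :> set R.
  by apply/seteqP; split => // y [mu mu_zero_error _]; apply: (no_mu); exists mu.
have Dq_set0 : [set (dt_depth t)%:R | t in [set t | computes f t]]%classic = set0 :> set R.
  by apply/seteqP; split => // y [t /no_tree].
by rewrite /R0q /Dq R0q_set0 Dq_set0 inf0 mul0r.
Qed.

Theorem theorem24 (R : realType) (N : nat) (f : pfun N) :
  Dq R f <= 2 * R0q R f * Bal R f.
Proof.
rewrite /Bal; case: ifP => [constant|/negbT].
  have [b preim_0] : exists b, preim_size f b = 0%N.
    by case/orP: constant => /eqP; [exists false|exists true].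
  rewrite mulr0; apply: le_trans (Dq_le_depth R (t := Leaf (~~ b)) _) _ => //.
  exact: computes_outside_card0 preim_0 (@leaf_computes_outside_preim _ f b).
rewrite negb_or -!lt0n => /andP [preim0_gt0 preim1_gt0].
rewrite [2 * _]mulrC -mulrA; apply: Dq_le_R0q_mul => [|mu mu_zero_error].
  by rewrite mulr_gt0 // lt_min !ltr_pwDl ?log2_nat_ge0.
rewrite mulrA [_ * 2]mulrC minElt; case: ifP => _; exact: Dq_le_preim_size.
Qed.
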